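(* Let $K\ge L\ge T\ge 2$ be integers, let $\kappa,\lambda$ be the smallest non-negative integers such that $K+1+\kappa$ and $L+1+\lambda$ are coprime to $T-1$, and put $K^\star=K+1+\kappa$, $L^\star=L+1+\lambda$, $\bar T=T-1$, $q=K^\star L^\star+\bar T^2$. Let $x$ be a positive integer coprime to $q$ and $y\in\{0,\dots,q-1\}$ the unique integer with $x\bar T+yK^\star\equiv 0\pmod q$. Then the only integer solutions $(i,j)$ of $ix\equiv jy\pmod q$ with $-L\le i\le T+L-1$ and $-K-T+1\le j\le K-1$ are (possibly) $(0,0)$, $(L^\star,\bar T)$ and $(\bar T,-K^\star)$. *)

From mathcomp Require Import all_boot all_algebra.
Set Implicit Arguments. Unset Strict Implicit. Unset Printing Implicit Defensive.

Definition least_coprime_shift (m d k : nat) : Prop :=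
  coprime (m + k) d /\ (forall k', (k' < k)%N -> ~~ coprime (m + k') d).

From mathcomp Require Import all_boot all_algebra.
From mathcomp Require Import zify ring.
Import GRing.Theory Num.Theory.
Local Open Scope ring_scope.

(* Write Ks = K*, Ls = L*, Tb = T-1.  From i x = j y and x Tb = - y Ks (mod q),
   x (i Ks + j Tb) = j (x Tb + y Ks) = 0 (mod q), and x is a unit mod q, so
   q | i Ks + j Tb.  As Ks and Tb are coprime and q = Ks Ls + Tb^2, the pairs
   (i, j) with q | i Ks + j Tb form the lattice with basis (Ls, Tb), (Tb, -Ks).
   A sign analysis of the coordinates shows that the box of the statement
   meets this lattice only in 0 and the two basis vectors. *)

Lemma dvdz_cross_comb {q x y u v i j : int} :
  coprimez x q -> (q %| x * u + y * v)%Z -> (i * x = j * y %[mod q])%Z ->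
  (q %| i * v + j * u)%Z.
Proof.
move=> cxq quv /eqP; rewrite eqz_mod_dvd => qij.
rewrite coprimez_sym in cxq; rewrite -(Gauss_dvdzr _ cxq).
have -> : x * (i * v + j * u) = (i * x - j * y) * v + j * (x * u + y * v) by ring.
by apply: rpredD; [apply: dvdz_mulr | apply: dvdz_mull].
Qed.

Lemma dvdz_lattice_decomp {k l t i j : int} :
  k != 0 -> coprimez k t -> (k * l + t ^+ 2 %| i * k + j * t)%Z ->
  exists a b : int, i = a * l + b * t /\ j = a * t - b * k.
Proof.
move=> k0 ckt /dvdzP[a ha].
have balance : (a * t - j) * t = (i - a * l) * k.
  apply/eqP; rewrite -subr_eq0.
  have -> : (a * t - j) * t - (i - a * l) * k = a * (k * l + t ^+ 2) - (i * k + j * t) by ring.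
  by rewrite ha subrr.
have /dvdzP[b hb] : (k %| a * t - j)%Z.
  by rewrite -(Gauss_dvdzl _ ckt) balance dvdz_mull.
exists a, b; split; last by rewrite -hb; ring.
have /(mulIf k0) hi : (i - a * l) * k = b * t * k by rewrite -balance hb; ring.
by rewrite -hi; ring.
Qed.

Lemma box_lattice_coords {K L Ks Ls Tb a b : int} :
  1 <= Tb < L -> L <= K -> K < Ks -> L < Ls ->
  - L <= a * Ls + b * Tb <= Tb + L ->
  - K - Tb <= a * Tb - b * Ks <= K - 1 ->
  (a, b) = (0, 0) \/ (a, b) = (1, 0) \/ (a, b) = (0, 1).
Proof.
move=> /andP[Tb1 TbL] LK KKs LLs /andP[i1 i2] /andP[j1 j2].
have b_ge0 : 0 <= b.
  have [b_neg|//] := ltrP b 0.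
  have [a_neg|a_ge0] := ltrP a 0; nia.
have b_le1 : b <= 1.
  have [b_gt1|//] := ltrP 1 b.
  have [a_le0|a_gt0] := lerP a 0; nia.
have [b0|b1] : b = 0 \/ b = 1 by lia.
- rewrite b0 !mul0r addr0 subr0 in i1 i2 j1 j2 *.
  have [a_neg|a_ge0] := ltrP a 0; first nia.
  have [a_gt1|a_le1] := ltrP 1 a; first nia.
  have [->|->] : a = 0 \/ a = 1 by lia.
  + by left.
  + by right; left.
- rewrite b1 !mul1r in i1 i2 j1 j2 *.
  have [a_neg|a_ge0] := ltrP a 0; first nia.
  have [a_gt0|a_le0] := ltrP 0 a; first nia.
  have -> : a = 0 by lia.
  by right; right.
Qed.

Theorem lemma6 (K L T kappa lambda x y : nat) :
  (2 <= T)%N -> (T <= L)%N -> (L <= K)%N ->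
  least_coprime_shift K.+1 T.-1 kappa ->
  least_coprime_shift L.+1 T.-1 lambda ->
  let Ks := (K.+1 + kappa)%N in
  let Ls := (L.+1 + lambda)%N in
  let Tb := T.-1 in
  let q := (Ks * Ls + Tb ^ 2)%N in
  (0 < x)%N -> coprime x q ->
  (y < q)%N -> (x * Tb + y * Ks = 0 %[mod q])%N ->
  forall i j : int,
    - (L%:Z) <= i <= (T + L)%:Z - 1 ->
    - (K%:Z) - T%:Z + 1 <= j <= K%:Z - 1 ->
    (i * x%:Z = j * y%:Z %[mod q%:Z])%Z ->
    (i, j) = (0, 0) \/ (i, j) = (Ls%:Z, Tb%:Z) \/ (i, j) = (Tb%:Z, - Ks%:Z).
Proof.
move=> T2 TL LK [cKsTb _] _ Ks Ls Tb q.
have Tb_bd : 1 <= Tb%:Z < L by lia.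
have Ks_gt : K%:Z < Ks by lia.
have Ls_gt : L%:Z < Ls by lia.
have TbZ : T%:Z = Tb%:Z + 1 by lia.
have qZ : q%:Z = Ks%:Z * Ls%:Z + Tb%:Z ^+ 2 by lia.
move=> _ cxq _ hmod i j i_bd j_bd hij.
rewrite PoszD TbZ addrAC addrK in i_bd.
rewrite TbZ opprD addrA subrK in j_bd.
have q_dvd : (q%:Z %| i * Ks%:Z + j * Tb%:Z)%Z.
  apply: (dvdz_cross_comb _ _ hij); first by rewrite coprimezE.
  by rewrite -!PoszM -PoszD /dvdz unfold_in /dvdn hmod mod0n.
rewrite qZ in q_dvd.
have Ks_neq0 : Ks%:Z != 0 by rewrite /Ks addSn.
move: i_bd j_bd.
have [a [b [-> ->]]] := dvdz_lattice_decomp Ks_neq0 (cKsTb : coprimez Ks Tb) q_dvd.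
move=> i_bd j_bd.
have := box_lattice_coords Tb_bd (LK : L%:Z <= K) Ks_gt Ls_gt i_bd j_bd.
by case=> [[-> ->]|[[-> ->]|[-> ->]]]; [left | right; left | right; right];
  congr pair; ring.
Qed.
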